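(* Let $N^h\ge 2$ be an integer, $h=1/N^h$, and let $\eta_K,\eta_M$ be real parameters. Let $\mathbf{K}_s=\mathbf{K}-\eta_K\mathbf{S}$ and $\mathbf{M}_{gs}=\mathbf{M}+\eta_M\mathbf{S}_g$ be the $(N^h-1)\times(N^h-1)$ matrices described in the context. Then the generalized matrix eigenvalue problem $\mathbf{K}_{s}\mathbf{U}_{gs}=\lambda^h_{gs}\mathbf{M}_{gs}\mathbf{U}_{gs}$ has, for every $j\in\{1,\dots,N^h-1\}$, the eigenpair $(\lambda^h_{gs,j},\mathbf{U}_{gs,j})$ given by \[ \lambda_{gs,j}^h=\frac{12}{h^2}\,\frac{\big(1-2\eta_K+2\eta_K\cos(t_j)\big)\sin^2(t_j/2)}{2+18\eta_M+(1-24\eta_M)\cos(t_j)+6\eta_M\cos(2t_j)},\qquad \mathbf{U}_{gs,j,k}=c_j\sin(k t_j),\quad k=1,\dots,N^h-1, \] where $t_j:=j\pi h$, $\mathbf{U}_{gs,j,k}$ denotes the $k$-th component of $\mathbf{U}_{gs,j}$, and $c_j>0$ is a normalization constant.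
   Context: Setting (linear finite elements, generalized SoftFEM, in 1D): Let $x_k=kh$, $k=0,\dots,N^h$, be a uniform mesh of $[0,1]$. Let $V^h$ be the space of continuous functions on $[0,1]$ that are affine on each $[x_{k-1},x_k]$ and vanish at $0$ and $1$, with hat basis $\phi_k$, $k=1,\dots,N^h-1$, $\phi_k(x_l)=\delta_{kl}$. For $v\in V^h$ and an interior node $x_k$ let $[\![v']\!](x_k)=v'(x_k^-)-v'(x_k^+)$ be the jump of the derivative. Define $a(v,w)=\int_0^1 v'w'\,dx$, $b(v,w)=\int_0^1 vw\,dx$, $s(v,w)=\sum_{k=1}^{N^h-1} h\,[\![v']\!](x_k)[\![w']\!](x_k)$, $s_g(v,w)=\sum_{k=1}^{N^h-1} h^3\,[\![v']\!](x_k)[\![w']\!](x_k)$, and the matrices $\mathbf{K}_{kl}=a(\phi_l,\phi_k)$, $\mathbf{M}_{kl}=b(\phi_l,\phi_k)$, $\mathbf{S}_{kl}=s(\phi_l,\phi_k)$, $(\mathbf{S}_g)_{kl}=s_g(\phi_l,\phi_k)$, $k,l=1,\dots,N^h-1$. Explicitly, $\mathbf{K}=\frac1h\,\mathrm{tridiag}(-1,2,-1)$, $\mathbf{M}=h\,\mathrm{tridiag}(\tfrac16,\tfrac23,\tfrac16)$, $\mathbf{S}=\frac1h$ times the symmetric pentadiagonal matrix with rows $(1,-4,6,-4,1)$ except that the first and last diagonal entries are $5$ (rows truncated at the boundary), and $\mathbf{S}_g=h^2\mathbf{S}$. *)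

From HB Require Import structures.
From mathcomp Require Import all_boot all_order all_algebra.
From mathcomp Require Import all_classical all_reals all_analysis.
Set Implicit Arguments. Unset Strict Implicit. Unset Printing Implicit Defensive.
Import Order.TTheory GRing.Theory Num.Theory.
Local Open Scope ring_scope.

Section SoftFEM.
Variable R : realType.

(* Matrix index i : 'I_(N.-1) stands for the interior node x_(i+1). *)

Definition mesh (N : nat) : R := 1 / N%:R.

Definition adj1 (i j : nat) : bool := (i.+1 == j) || (j.+1 == i).

Definition Kmat (N : nat) : 'M[R]_(N.-1) :=
  \matrix_(i, j) ((mesh N)^-1 *
     (if i == j then 2 else if adj1 i j then -1 else 0)).

Definition Mmat (N : nat) : 'M[R]_(N.-1) :=
  \matrix_(i, j) (mesh N *
     (if i == j then 2 / 3 else if adj1 i j then 1 / 6 else 0)).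

(* [[phi_k']](x_m) = phi_k'(x_m^-) - phi_k'(x_m^+), for interior nodes k, m *)
Definition jump (N k m : nat) : R :=
  (mesh N)^-1 * (if k == m then 2 else if adj1 k m then -1 else 0).

(* S_{kl} = s(phi_l, phi_k) = sum_m h [[phi_l']](x_m) [[phi_k']](x_m) *)
Definition Smat (N : nat) : 'M[R]_(N.-1) :=
  \matrix_(k, l) \sum_(m < N.-1) (mesh N * jump N l m * jump N k m).

(* (S_g)_{kl} = s_g(phi_l, phi_k) = sum_m h^3 [[phi_l']](x_m) [[phi_k']](x_m) *)
Definition Sgmat (N : nat) : 'M[R]_(N.-1) :=
  \matrix_(k, l) \sum_(m < N.-1) (mesh N ^+ 3 * jump N l m * jump N k m).

Definition Ksmat (N : nat) (etaK : R) : 'M[R]_(N.-1) := Kmat N - etaK *: Smat N.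
Definition Mgsmat (N : nat) (etaM : R) : 'M[R]_(N.-1) := Mmat N + etaM *: Sgmat N.

Definition tj (N j : nat) : R := j%:R * pi * mesh N.

Definition lam_denom (N j : nat) (etaM : R) : R :=
  2 + 18 * etaM + (1 - 24 * etaM) * cos (tj N j) + 6 * etaM * cos (2 * tj N j).

Definition lam_gs (N j : nat) (etaK etaM : R) : R :=
  12 / (mesh N ^+ 2) *
  ((1 - 2 * etaK + 2 * etaK * cos (tj N j)) * sin (tj N j / 2) ^+ 2)
  / lam_denom N j etaM.

Definition U_gs (N j : nat) (c : R) : 'cV[R]_(N.-1) :=
  \col_i (c * sin ((i.+1)%:R * tj N j)).

End SoftFEM.

(* The sine vector v_k = sin (k t), with t = j pi h, vanishes at k = 0 and
   k = N and satisfies v_(k-1) + v_(k+1) = 2 cos t v_k, so it is an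
   eigenvector of every tridiagonal Toeplitz matrix tridiag(q, p, q), with
   eigenvalue p + 2 q cos t.  The derivative jump of phi_k at x_m is
   h^-1 T_km with T = tridiag(-1, 2, -1), hence S = h^-1 T^2 and S_g = h T^2,
   while K = h^-1 T and M = h tridiag(1/6, 2/3, 1/6).  So K_s and M_gs both
   act on v as scalars, and their quotient is lambda_gs once
   2 - 2 cos t = 4 sin^2 (t/2) and cos 2t = 2 cos^2 t - 1 are substituted. *)

From Pilot Require Import Defs.
From HB Require Import structures.
From mathcomp Require Import all_boot all_order all_algebra.
From mathcomp Require Import all_classical all_reals all_analysis.
From mathcomp Require Import ring zify.
Import Order.TTheory GRing.Theory Num.Theory.
Set Implicit Arguments.
Unset Strict Implicit.
Unset Printing Implicit Defensive.

Local Open Scope ring_scope.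

Section TridiagonalToeplitz.
Variable R : comPzRingType.

(* The qualified name is needed: matrix.v exports a lemma [adj1]. *)
Definition tridiag_mx n (p q : R) : 'M[R]_n :=
  \matrix_(i, j) (if i == j then p else if Defs.adj1 i j then q else 0).

Lemma tr_tridiag_mx n (p q : R) : (tridiag_mx n p q)^T = tridiag_mx n p q.
Proof. by apply/matrixP => i j; rewrite !mxE eq_sym /Defs.adj1 orbC. Qed.

Lemma sumr_delta n m (F : nat -> R) :
  \sum_(k < n) (k == m :> nat)%:R * F k = if (m < n)%N then F m else 0.
Proof.
rewrite -(big_ord1_eq +%R F m n) [RHS]big_mkcond; apply: eq_bigr => k _.
by case: eqP => _; rewrite ?mul1r ?mul0r.
Qed.

Lemma tridiag_mx_delta n (p q : R) (i k : 'I_n) :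
  tridiag_mx n p q i k =
  p * (k == i :> nat)%:R + q * (k == i.+1 :> nat)%:R + q * (k.+1 == i :> nat)%:R.
Proof.
rewrite mxE /Defs.adj1 (eq_sym (val k)) (eq_sym (val k) i.+1).
have -> : (i == k) = (val i == val k) by [].
case: i k => [i _] [k _] /=.
case: (boolP (i == k)) => e1; case: (boolP (i.+1 == k)) => e2;
  case: (boolP (k.+1 == i)) => e3 /=; rewrite ?mulr0 ?mulr1 ?addr0 ?add0r //;
  exfalso; move: e1 e2 e3; lia.
Qed.

Lemma tridiag_mulmx_col n (p q : R) (g : nat -> R) (i : 'I_n) :
  g 0%N = 0 -> g n.+1 = 0 ->
  (tridiag_mx n p q *m \col_(k < n) g k.+1) i 0 = p * g i.+1 + q * (g i + g i.+2).
Proof.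
move=> g0 gn; rewrite !mxE.
under eq_bigr => k _ do rewrite tridiag_mx_delta !mxE !mulrDl -!mulrA.
rewrite !big_split /= -!mulr_sumr !(sumr_delta _ _ (fun k => g k.+1)) ltn_ord.
have -> : (if (i.+1 < n)%N then g i.+2 else 0) = g i.+2.
  by case: ltnP => // ?; have -> : i.+1 = n by have := ltn_ord i; lia.
case: i => [[|i] lt_in] /=.
  by rewrite big1 => [|k _]; rewrite ?g0 ?mul0r //; ring.
under eq_bigr => k _ do rewrite eqSS.
by rewrite (sumr_delta _ _ (fun k => g k.+1)) (ltnW lt_in); ring.
Qed.

Lemma tridiag_mulmx_eigen n (p q mu : R) (g : nat -> R) :
  g 0%N = 0 -> g n.+1 = 0 -> (forall k, g k + g k.+2 = mu * g k.+1) ->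
  tridiag_mx n p q *m (\col_(k < n) g k.+1) = (p + q * mu) *: \col_(k < n) g k.+1.
Proof.
move=> g0 gn rec; apply/matrixP => i z; rewrite ord1 tridiag_mulmx_col //.
by rewrite !mxE rec; ring.
Qed.

End TridiagonalToeplitz.

Section SoftFEM.
Variable R : realType.

Lemma sinB_add_sinD (x y : R) : sin (x - y) + sin (x + y) = 2 * cos y * sin x.
Proof. by rewrite sinB sinD; ring. Qed.

Lemma sin_natr_mulpi k : sin (k%:R * pi) = 0 :> R.
Proof.
by elim: k => [|k IH]; rewrite ?mul0r ?sin0 // mulrSr mulrDl mul1r sinDpi IH oppr0.
Qed.

Lemma cos_sin_half (x : R) : cos x = 1 - (sin (x / 2) ^+ 2) *+ 2.
Proof. by rewrite {1}(splitr x) -mulr2n cos_mulr2n cos2sin2; ring. Qed.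

Definition sin_col n (t : R) : 'cV[R]_n := \col_(i < n) sin (i.+1%:R * t).

Lemma tridiag_mulmx_sin_col n (p q t : R) : sin (n.+1%:R * t) = 0 ->
  tridiag_mx n p q *m sin_col n t = (p + q * (2 * cos t)) *: sin_col n t.
Proof.
move=> sin_end.
apply: (@tridiag_mulmx_eigen _ _ _ _ _ (fun k => sin (k%:R * t))) => //.
  by rewrite mul0r sin0.
move=> k /=.
have -> : k%:R * t = k.+1%:R * t - t by rewrite mulrSr mulrDl mul1r addrK.
have -> : k.+2%:R * t = k.+1%:R * t + t by rewrite [k.+2%:R]mulrSr mulrDl mul1r.
exact: sinB_add_sinD.
Qed.

Section Mesh.
Variables (N : nat) (N_gt0 : (0 < N)%N).

Lemma mesh_gt0 : 0 < mesh R N.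
Proof. by rewrite /mesh div1r invr_gt0 ltr0n. Qed.

Lemma natr_mul_tj j : N%:R * tj R N j = j%:R * pi.
Proof. by rewrite /tj /mesh; field; rewrite pnatr_eq0 -lt0n. Qed.

Lemma tj_gt0_ltpi j : (0 < j < N)%N -> 0 < tj R N j < pi.
Proof.
move=> /andP[j_gt0 j_ltN].
have t_ltpi : N%:R * tj R N j < N%:R * pi.
  by rewrite natr_mul_tj ltr_pM2r ?pi_gt0 // ltr_nat.
rewrite ltr_pM2l ?ltr0n // in t_ltpi.
by rewrite t_ltpi andbT /tj mulr_gt0 ?mesh_gt0 // mulr_gt0 ?pi_gt0 ?ltr0n.
Qed.

End Mesh.

Section SoftFEMMatrices.
Variables (N : nat) (N_gt0 : (0 < N)%N).
Local Notation h := (mesh R N).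
Local Notation T := (tridiag_mx N.-1 2 (-1)).

Lemma Kmat_tridiag : Kmat R N = h^-1 *: T.
Proof. by apply/matrixP => k l; rewrite !mxE. Qed.

Lemma Mmat_tridiag : Mmat R N = h *: tridiag_mx N.-1 (2 / 3) (1 / 6).
Proof. by apply/matrixP => k l; rewrite !mxE. Qed.

Lemma jump_sum_tridiag (w : R) :
  \matrix_(k, l) \sum_(m < N.-1) (w * jump R N l m * jump R N k m) =
  (w / h ^+ 2) *: (T *m T).
Proof.
apply/matrixP => k l; rewrite !mxE mulr_sumr; apply: eq_bigr => m _.
rewrite -[in T m l]tr_tridiag_mx !mxE /jump.
set a := (if k == m then _ else _); set b := (if l == m then _ else _).
by rewrite -exprVn expr2; ring.
Qed.

Lemma Smat_tridiag : Smat R N = h^-1 *: (T *m T).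
Proof.
by rewrite /Smat jump_sum_tridiag; congr (_ *: _); field; rewrite gt_eqF ?mesh_gt0.
Qed.

Lemma Sgmat_tridiag : Sgmat R N = h *: (T *m T).
Proof.
by rewrite /Sgmat jump_sum_tridiag; congr (_ *: _); field; rewrite gt_eqF ?mesh_gt0.
Qed.

Variable t : R.
Hypothesis sin_Nt : sin (N%:R * t) = 0.
Local Notation v := (sin_col N.-1 t).

Lemma tridiag_mulmx_sin_col_mesh (p q : R) :
  tridiag_mx N.-1 p q *m v = (p + q * (2 * cos t)) *: v.
Proof. by apply: tridiag_mulmx_sin_col; rewrite prednK. Qed.

Lemma Ksmat_sin_col etaK :
  Ksmat N etaK *m v =
  (h^-1 * ((2 - 2 * cos t) - etaK * (2 - 2 * cos t) ^+ 2)) *: v.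
Proof.
rewrite /Ksmat Kmat_tridiag Smat_tridiag mulmxBl -!scalemxAl -mulmxA.
rewrite !tridiag_mulmx_sin_col_mesh -scalemxAr tridiag_mulmx_sin_col_mesh.
rewrite !scalerA -scalerBl.
by congr (_ *: _); ring.
Qed.

Lemma Mgsmat_sin_col etaM :
  Mgsmat N etaM *m v =
  (h * (2 / 3 + cos t / 3 + etaM * (2 - 2 * cos t) ^+ 2)) *: v.
Proof.
rewrite /Mgsmat Mmat_tridiag Sgmat_tridiag mulmxDl -!scalemxAl -mulmxA.
rewrite !tridiag_mulmx_sin_col_mesh -scalemxAr tridiag_mulmx_sin_col_mesh.
rewrite !scalerA -scalerDl.
by congr (_ *: _); field.
Qed.

End SoftFEMMatrices.

Lemma lam_gs_mul N j (etaK etaM : R) :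
  (0 < N)%N -> lam_denom N j etaM != 0 ->
  lam_gs N j etaK etaM *
    (mesh R N *
      (2 / 3 + cos (tj R N j) / 3 + etaM * (2 - 2 * cos (tj R N j)) ^+ 2)) =
  (mesh R N)^-1 *
    ((2 - 2 * cos (tj R N j)) - etaK * (2 - 2 * cos (tj R N j)) ^+ 2).
Proof.
rewrite /lam_gs /lam_denom => N_gt0; set t := tj R N j.
have -> : cos (2 * t) = cos t ^+ 2 *+ 2 - 1 by rewrite mulr_natl cos_mulr2n.
rewrite cos_sin_half => D_neq0.
by field; rewrite !mulr_natr D_neq0 andbT gt_eqF ?mesh_gt0.
Qed.

End SoftFEM.

Theorem lemma1 (R : realType) (N : nat) (etaK etaM : R) (j : nat) (c : R) :
  (2 <= N)%N -> (1 <= j <= N.-1)%N -> 0 < c ->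
  lam_denom N j etaM != 0 ->
  U_gs N j c != 0 /\
  Ksmat N etaK *m U_gs N j c = lam_gs N j etaK etaM *: (Mgsmat N etaM *m U_gs N j c).
Proof.
move=> N_ge2 j_range c_gt0 D_neq0.
have N_gt0 : (0 < N)%N by lia.
have j_ltN : (0 < j < N)%N by lia.
have sin_Nt : sin (N%:R * tj R N j) = 0 by rewrite natr_mul_tj // sin_natr_mulpi.
have -> : U_gs N j c = c *: sin_col N.-1 (tj R N j).
  by apply/matrixP => i k; rewrite !mxE.
split.
  have n_gt0 : (0 < N.-1)%N by lia.
  rewrite scaler_eq0 negb_or gt_eqF //=.
  apply/eqP => /matrixP /(_ (Ordinal n_gt0) 0) /eqP.
  by rewrite !mxE mul1r gt_eqF // sin_gt0_pi // tj_gt0_ltpi.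
rewrite -!scalemxAr Ksmat_sin_col // Mgsmat_sin_col // !scalerA; congr (_ *: _).
by rewrite [RHS]mulrAC lam_gs_mul //; ring.
Qed.
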